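(* Let $S\ni h$ be a polarized lattice. For any pair $\Delta',\Delta''$ of Weyl chambers for $\operatorname{rt}(S,h)$, there are canonical isomorphisms $\operatorname{Fn}_{\Delta'}(S,h)\cong\operatorname{Fn}_{\Delta''}(S,h)$ and $\operatorname{Fex}_{\Delta'}(S,h)\cong\operatorname{Fex}_{\Delta''}(S,h)$.
   Context: All lattices are even and nondegenerate. A polarized lattice is $(S,h)$ with $S$ hyperbolic and $h^2>0$. $\operatorname{root}_n(S,h)=\{r\in S: r^2=-2,\ r\cdot h=n\}$; $\operatorname{rt}(S,h)$ is the root lattice generated by $\operatorname{root}_0(S,h)$. A Weyl chamber $\Delta$ is determined by its positive roots $P_\Delta$, and $\mathfrak{b}(\Delta)$ is its set of simple (indecomposable positive) roots, called exceptional divisors. The Fano graph $\operatorname{Fn}_\Delta(S,h)=\{l\in\operatorname{root}_1(S,h): l\cdot e\ge0\ \forall e\in\mathfrak{b}(\Delta)\}$ has edges of multiplicity $l_1\cdot l_2$ between distinct vertices. The extended Fano graph $\operatorname{Fex}_\Delta(S,h)=\operatorname{Fn}_\Delta(S,h)\cup\mathfrak{b}(\Delta)$ has the same edge convention and vertices colored by $v\cdot h\in\{0,1\}$; isomorphisms are of (bi-colored) graphs. *)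

From mathcomp Require Import all_boot all_order all_algebra.
Set Implicit Arguments. Unset Strict Implicit. Unset Printing Implicit Defensive.
Import Order.TTheory GRing.Theory Num.Theory.
Local Open Scope ring_scope.

(* A lattice S of rank n is Z^n (row vectors) with the bilinear form
   x.y = x G y^T given by an integer Gram matrix G. *)
Definition dot (n : nat) (G : 'M[int]_n) (x y : 'rV[int]_n) : int :=
  (x *m G *m y^T) 0 0.

Definition even_nondeg_lattice (n : nat) (G : 'M[int]_n) : Prop :=
  [/\ G^T = G, (forall i, (2 %| G i i)%Z) & \det G != 0].

(* hyperbolic = signature (1, n-1): some v with v^2 > 0 whose orthogonal
   complement is negative definite *)
Definition hyperbolic (n : nat) (G : 'M[int]_n) : Prop :=
  exists v : 'rV[int]_n, 0 < dot G v v /\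
    forall x, dot G x v = 0 -> x != 0 -> dot G x x < 0.

Definition roots_ (n : nat) (G : 'M[int]_n) (h : 'rV[int]_n) (k : int)
  (r : 'rV[int]_n) : bool :=
  (dot G r r == -2) && (dot G r h == k).

(* A Weyl chamber of rt(S,h), represented by its set of positive roots P:
   P = { r in root_0 : r.x > 0 } for some x not orthogonal to any root of
   rt(S,h) (these are exactly the elements of root_0(S,h)). *)
Definition is_weyl_chamber (n : nat) (G : 'M[int]_n) (h : 'rV[int]_n)
  (P : pred 'rV[int]_n) : Prop :=
  (forall r, P r -> roots_ G h 0 r) /\
  exists x : 'rV[int]_n,
    (forall r, roots_ G h 0 r -> dot G r x != 0) /\
    (forall r, roots_ G h 0 r -> (P r <-> 0 < dot G r x)).

(* b(Delta): simple (indecomposable positive) roots = exceptional divisors *)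
Definition exceptional (n : nat) (P : pred 'rV[int]_n) (e : 'rV[int]_n) : Prop :=
  P e /\ ~ (exists a b, [/\ P a, P b & e = a + b]).

Definition Fn (n : nat) (G : 'M[int]_n) (h : 'rV[int]_n) (P : pred 'rV[int]_n)
  (l : 'rV[int]_n) : Prop :=
  roots_ G h 1 l /\ (forall e, exceptional P e -> 0 <= dot G l e).

Definition Fex (n : nat) (G : 'M[int]_n) (h : 'rV[int]_n) (P : pred 'rV[int]_n)
  (v : 'rV[int]_n) : Prop :=
  Fn G h P v \/ exceptional P v.

Definition refl (n : nat) (G : 'M[int]_n) (r x : 'rV[int]_n) : 'rV[int]_n :=
  x + dot G x r *: r.

Definition weyl_elt (n : nat) (G : 'M[int]_n) (ws : seq 'rV[int]_n)
  : 'rV[int]_n -> 'rV[int]_n :=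
  foldr (fun r f => refl G r \o f) id ws.

From mathcomp Require Import all_boot all_order all_algebra.
From mathcomp Require Import zify ring.
From Stdlib Require Import Classical_Prop.
Import Order.TTheory GRing.Theory Num.Theory.
Local Open Scope ring_scope.
Set Implicit Arguments. Unset Strict Implicit.

(* The Weyl group W of rt(S,h) acts transitively on its chambers, so some
   w in W sends Delta' to Delta''; being an additive isometry fixing h, w
   carries simple roots to simple roots and hence Fn, Fex for Delta' onto
   those for Delta''.  To find w, pick x' and x'' in the interiors of Delta'
   and Delta'' and reflect x' in a root separating it from x'' as long as
   there is one.  Each such reflection lowers (h.(y - x''))^2 - h^2 (y - x'')^2
   by at least 2 h^2, and this quantity is nonnegative by the reverse
   Cauchy-Schwarz inequality of the hyperbolic lattice S, so the process
   stops. *)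

Section Form.
Variables (n : nat) (G : 'M[int]_n).
Implicit Types x y z : 'rV[int]_n.

Lemma dotDl x y z : dot G (x + y) z = dot G x z + dot G y z.
Proof. by rewrite /dot !mulmxDl mxE. Qed.

Lemma dotDr x y z : dot G z (x + y) = dot G z x + dot G z y.
Proof. by rewrite /dot linearD /= mulmxDr mxE. Qed.

Lemma dotZl a x z : dot G (a *: x) z = a * dot G x z.
Proof. by rewrite /dot -!scalemxAl mxE. Qed.

Lemma dotZr a x z : dot G z (a *: x) = a * dot G z x.
Proof. by rewrite /dot linearZ /= -scalemxAr mxE. Qed.

Lemma dotNl x z : dot G (- x) z = - dot G x z.
Proof. by rewrite -scaleN1r dotZl mulN1r. Qed.

Lemma dotNr x z : dot G z (- x) = - dot G z x.
Proof. by rewrite -scaleN1r dotZr mulN1r. Qed.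

Lemma dot0l z : dot G 0 z = 0.
Proof. by rewrite /dot !mul0mx mxE. Qed.

Definition dotE := (dotDl, dotDr, dotNl, dotNr, dotZl, dotZr).

Lemma dotC x y : G^T = G -> dot G x y = dot G y x.
Proof.
move=> sG; rewrite /dot.
have -> : (y *m G *m x^T) 0 0 = ((y *m G *m x^T)^T) 0 0 by rewrite [RHS]mxE.
by rewrite !trmx_mul trmxK sG mulmxA.
Qed.

End Form.

Section Hyperbolic.
Variables (n : nat) (G : 'M[int]_n).
Hypotheses (G_sym : G^T = G) (G_hyp : hyperbolic G).
Variable h : 'rV[int]_n.
Hypothesis h_pos : 0 < dot G h h.
Implicit Types z : 'rV[int]_n.

Lemma hyperbolic_orthogonal_nonpos z : dot G z h = 0 -> dot G z z <= 0.
Proof.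
move=> zh; rewrite leNgt; apply/negP => zz_pos.
have [v [vv_pos v_perp_neg]] := G_hyp.
(* w lies both in the positive definite plane <z, h> and in v^perp *)
pose w := dot G v h *: z - dot G v z *: h.
have wv : dot G w v = 0 by rewrite !dotE (dotC v h) // (dotC v z) //; ring.
have ww : dot G w w = dot G v h ^+ 2 * dot G z z + dot G v z ^+ 2 * dot G h h.
  by rewrite !dotE (dotC h z) // zh; ring.
have [w0|] := eqVneq w 0; last by move/(v_perp_neg w wv); rewrite ww; nia.
have hv : dot G h v = 0.
  by rewrite (dotC h v) //; move: ww; rewrite w0 dot0l; nia.
have h_neq0 : h != 0 by apply: contraTneq h_pos => ->; rewrite dot0l ltxx.
by have := v_perp_neg h hv h_neq0; rewrite ltNge (ltW h_pos).
Qed.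

Lemma hyperbolic_reverse_CauchySchwarz z :
  dot G h h * dot G z z <= dot G z h ^+ 2.
Proof.
have := hyperbolic_orthogonal_nonpos (z := dot G h h *: z - dot G z h *: h).
rewrite !dotE (dotC h z) // => /(_ ltac:(ring)).
move: (dot G h h) (dot G z z) (dot G z h) h_pos => hh zz zh hh_pos le; nia.
Qed.

End Hyperbolic.

Definition regular (n : nat) (G : 'M[int]_n) (h y : 'rV[int]_n) : Prop :=
  forall r, roots_ G h 0 r -> dot G r y != 0.

Section Reflection.
Variables (n : nat) (G : 'M[int]_n).
Hypothesis G_sym : G^T = G.
Implicit Types r x y : 'rV[int]_n.

Lemma dot_refl r x y : dot G r r = -2 ->
  dot G (refl G r x) (refl G r y) = dot G x y.
Proof. by move=> rr; rewrite !dotE rr (dotC r y) //; ring. Qed.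

Lemma refl_adjoint r x y : dot G x (refl G r y) = dot G (refl G r x) y.
Proof. by rewrite !dotE (dotC r y) //; ring. Qed.

Lemma reflK r : dot G r r = -2 -> involutive (refl G r).
Proof.
move=> rr x; rewrite /refl dotDl dotZl rr -addrA -scalerDl.
have -> : dot G x r + (dot G x r + dot G x r * -2) = 0 by ring.
by rewrite scale0r addr0.
Qed.

Lemma reflD r x y : refl G r (x + y) = refl G r x + refl G r y.
Proof. by rewrite /refl dotDl scalerDl addrACA. Qed.

Lemma refl_orthogonal r x : dot G x r = 0 -> refl G r x = x.
Proof. by move=> xr; rewrite /refl xr scale0r addr0. Qed.

Lemma weyl_elt_rcons ws r x :
  weyl_elt G (rcons ws r) x = weyl_elt G ws (refl G r x).
Proof. by elim: ws => //= s ws ->. Qed.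

Lemma weyl_eltD ws x y :
  weyl_elt G ws (x + y) = weyl_elt G ws x + weyl_elt G ws y.
Proof. by elim: ws => //= s ws ->; rewrite reflD. Qed.

Variables (h : 'rV[int]_n) (ws : seq 'rV[int]_n).
Hypothesis ws_roots : {in ws, forall r, roots_ G h 0 r}.

Let ws_cons s ws' : {in s :: ws', forall r, roots_ G h 0 r} ->
  [/\ dot G s s = -2, dot G h s = 0 & {in ws', forall r, roots_ G h 0 r}].
Proof.
move=> Hs; have /andP[/eqP ss /eqP sh] := Hs s (mem_head _ _).
by split=> [||r r_in]; [|rewrite dotC|apply: Hs; rewrite inE r_in orbT].
Qed.

Lemma dot_weyl_elt x y :
  dot G (weyl_elt G ws x) (weyl_elt G ws y) = dot G x y.
Proof.
elim: ws ws_roots => //= s ws' IH /ws_cons[ss _ Hws'].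
by rewrite dot_refl // IH.
Qed.

Lemma weyl_elt_fix_h : weyl_elt G ws h = h.
Proof.
elim: ws ws_roots => //= s ws' IH /ws_cons[_ hs Hws'].
by rewrite IH // refl_orthogonal.
Qed.

Lemma weyl_elt_bij : bijective (weyl_elt G ws).
Proof.
elim: ws ws_roots => /= [|s ws' IH /ws_cons[ss _ Hws']]; first by exists id.
by apply: bij_comp; [exists (refl G s); apply: reflK | exact: IH].
Qed.

End Reflection.

Section Descent.
Variables (n : nat) (G : 'M[int]_n) (h x : 'rV[int]_n).
Hypotheses (G_sym : G^T = G) (G_hyp : hyperbolic G) (h_pos : 0 < dot G h h).
Hypothesis x_regular : regular G h x.
Implicit Types r y : 'rV[int]_n.

Definition chamber_gap y :=
  dot G (y - x) h ^+ 2 - dot G h h * dot G (y - x) (y - x).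

Lemma chamber_gap_ge0 y : 0 <= chamber_gap y.
Proof. by rewrite subr_ge0 hyperbolic_reverse_CauchySchwarz. Qed.

Lemma chamber_gap_refl r y : roots_ G h 0 r ->
  chamber_gap (refl G r y) =
  chamber_gap y + 2 * dot G h h * (dot G r y * dot G r x).
Proof.
case/andP=> /eqP rr /eqP rh; rewrite /chamber_gap !dotE rh rr.
by rewrite (dotC y r) // (dotC x r) //; ring.
Qed.

Lemma regular_refl r y : roots_ G h 0 r -> regular G h y ->
  regular G h (refl G r y).
Proof.
move=> /andP[/eqP rr /eqP rh] y_reg s /andP[/eqP ss /eqP sh].
rewrite refl_adjoint //; apply: y_reg; rewrite /roots_ dot_refl // ss eqxx /=.
by rewrite dotDl dotZl sh rh mulr0 addr0.
Qed.

Lemma same_chamber_of_unseparated y : regular G h y ->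
  ~ (exists r, roots_ G h 0 r /\ dot G r y * dot G r x < 0) ->
  forall r, roots_ G h 0 r -> 0 < dot G r y * dot G r x.
Proof.
move=> y_reg no_sep r r_root; rewrite lt_neqAle eq_sym mulf_eq0.
rewrite negb_or y_reg // x_regular // leNgt; apply/negP => neg.
by apply: no_sep; exists r.
Qed.

Lemma weyl_descent y : regular G h y ->
  exists ws, {in ws, forall r, roots_ G h 0 r} /\
    forall r, roots_ G h 0 r -> 0 < dot G r (weyl_elt G ws y) * dot G r x.
Proof.
have [N] : exists N : nat, chamber_gap y < N%:Z.
  exists `|chamber_gap y|.+1%N.
  by rewrite -addn1 PoszD abszE ltr_pwDr ?ler_norm.
elim: N y => [|N IH] y gap_y y_reg.
  by have := chamber_gap_ge0 y; rewrite leNgt gap_y.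
have [[r [r_root r_sep]]|no_sep] :=
  classic (exists r, roots_ G h 0 r /\ dot G r y * dot G r x < 0); last first.
  by exists [::]; split=> //; apply: same_chamber_of_unseparated.
have gap_refl : chamber_gap (refl G r y) < N%:Z.
  by move: gap_y; rewrite chamber_gap_refl //; nia.
have [ws [ws_roots ws_sep]] := IH _ gap_refl (regular_refl r_root y_reg).
exists (rcons ws r); split=> [s|s s_root].
  by rewrite mem_rcons inE => /predU1P[->|/ws_roots].
by rewrite weyl_elt_rcons ws_sep.
Qed.

End Descent.

Section Isometry.
Variables (n : nat) (G : 'M[int]_n) (h : 'rV[int]_n).
Variables (w w' : 'rV[int]_n -> 'rV[int]_n).
Hypotheses (wK : cancel w w') (w'K : cancel w' w).
Hypothesis wD : {morph w : x y / x + y}.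
Hypothesis w_isometry : forall x y, dot G (w x) (w y) = dot G x y.
Hypothesis w_h : w h = h.
Implicit Types x : 'rV[int]_n.

Lemma roots_isometry k x : roots_ G h k (w x) = roots_ G h k x.
Proof. by rewrite /roots_ !w_isometry -{1}w_h w_isometry. Qed.

Lemma chamber_isometry P1 P2 x1 x2 :
  (forall r, P1 r -> roots_ G h 0 r) ->
  (forall r, roots_ G h 0 r -> (P1 r <-> 0 < dot G r x1)) ->
  (forall r, P2 r -> roots_ G h 0 r) ->
  (forall r, roots_ G h 0 r -> (P2 r <-> 0 < dot G r x2)) ->
  (forall r, roots_ G h 0 r -> 0 < dot G r (w x1) * dot G r x2) ->
  forall r, P2 (w r) <-> P1 r.
Proof.
move=> P1_roots P1_x1 P2_roots P2_x2 same_side r.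
have [r_root|r_nonroot] := boolP (roots_ G h 0 r); last first.
  by split=> [/P2_roots|/P1_roots]; rewrite ?roots_isometry (negbTE r_nonroot).
have wr_root : roots_ G h 0 (w r) by rewrite roots_isometry.
rewrite P2_x2 // P1_x1 // -(w_isometry r x1).
by have := same_side _ wr_root; split=> ?; nia.
Qed.

Variables P1 P2 : pred 'rV[int]_n.
Hypothesis P_image : forall r, P2 (w r) <-> P1 r.

Lemma exceptional_isometry e : exceptional P2 (w e) <-> exceptional P1 e.
Proof.
split=> -[Pe e_simple]; split; try exact/P_image.
  move=> [a [b [Pa Pb eab]]]; apply: e_simple; exists (w a), (w b).
  by split; [exact/P_image | exact/P_image | rewrite -wD eab].
move=> [a [b [Pa Pb eab]]]; apply: e_simple; exists (w' a), (w' b).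
by split; [apply/P_image; rewrite w'K.. | apply: (can_inj wK); rewrite wD !w'K].
Qed.

Lemma Fn_isometry v : Fn G h P2 (w v) <-> Fn G h P1 v.
Proof.
rewrite /Fn roots_isometry; split=> -[v_root v_nef]; split=> // e.
  by move/exceptional_isometry/v_nef; rewrite w_isometry.
by rewrite -[e]w'K exceptional_isometry w_isometry => /v_nef.
Qed.

Lemma Fex_isometry v : Fex G h P2 (w v) <-> Fex G h P1 v.
Proof. by rewrite /Fex Fn_isometry exceptional_isometry. Qed.

End Isometry.

Theorem lemma2p3 (n : nat) (G : 'M[int]_n) (h : 'rV[int]_n)
    (P1 P2 : pred 'rV[int]_n) :
  even_nondeg_lattice G -> hyperbolic G -> 0 < dot G h h ->
  is_weyl_chamber G h P1 -> is_weyl_chamber G h P2 ->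
  exists ws : seq 'rV[int]_n,
    (forall r, r \in ws -> roots_ G h 0 r) /\
    bijective (weyl_elt G ws) /\
    (forall x y, dot G (weyl_elt G ws x) (weyl_elt G ws y) = dot G x y) /\
    weyl_elt G ws h = h /\
    (forall v, Fn G h P1 v <-> Fn G h P2 (weyl_elt G ws v)) /\
    (forall v, Fex G h P1 v <-> Fex G h P2 (weyl_elt G ws v)).
Proof.
move=> [G_sym _ _] G_hyp h_pos.
move=> [P1_roots [x1 [x1_reg P1_x1]]] [P2_roots [x2 [x2_reg P2_x2]]].
have [ws [ws_roots same_side]] := weyl_descent G_sym G_hyp h_pos x2_reg x1_reg.
have w_bij := weyl_elt_bij G_sym ws_roots; have [w' wK w'K] := w_bij.
have w_isometry := dot_weyl_elt G_sym ws_roots.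
have w_h := weyl_elt_fix_h G_sym ws_roots.
have P_image :=
  chamber_isometry w_isometry w_h P1_roots P1_x1 P2_roots P2_x2 same_side.
have wD := weyl_eltD G ws.
exists ws; do 4!split=> //; split=> v.
  by rewrite (Fn_isometry wK w'K wD w_isometry w_h P_image).
by rewrite (Fex_isometry wK w'K wD w_isometry w_h P_image).
Qed.
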